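(* For all processes $s,t$ of a PTS over $A_\tau=A\cup\{\tau\}$, the weak trace metric satisfies $\mathbf{d}^{\mathrm{w}}(s,t)=0$ if and only if $s$ and $t$ are weak probabilistic trace equivalent.
   Context: A PTS is $(\mathcal{S},A_\tau,\to)$ with $\mathcal{S}$ a countable set of processes, $A_\tau=A\cup\{\tau\}$ ($\tau\notin A$ the silent action), $\to\subseteq\mathcal{S}\times A_\tau\times\Delta(\mathcal{S})$ with $\Delta(\mathcal{S})$ the finitely supported distributions. Standing assumptions: processes are image-finite and finite. Computations $c=s_0\xrightarrow{a_1}s_1\cdots\xrightarrow{a_n}s_n$ use transitions $s_{i-1}\xrightarrow{a_i}\pi_i$ with $s_i\in\mathrm{supp}(\pi_i)$, $\Pr(c)=\prod_i\pi_i(s_i)$; $\mathrm{tr}(c)=a_1\cdots a_n\in A_\tau^\star$; maximal = not a proper prefix of another computation from the same process; $\mathcal{C}_{\max}(z,\alpha)$ = maximal computations from $z$ with trace $\alpha$. A resolution of $s$ is a PTS $\mathcal{Z}=(Z,A_\tau,\to_{\mathcal{Z}})$ with $\mathrm{corr}\colon Z\to\mathcal{S}$ and initial state $z_s$, $\mathrm{corr}(z_s)=s$, such that $z_s$ is in no target support, every other state is in the support of a target of a transition from a different state, every $z\xrightarrow{a}_{\mathcal{Z}}\pi$ is matched by $\mathrm{corr}(z)\xrightarrow{a}\pi'$ with $\pi(z')=\pi'(\mathrm{corr}(z'))$ for all $z'$, and each state has at most one outgoing transition; $\mathrm{res}(s)$ is the set of resolutions of $s$. Two traces $\alpha,\beta\in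 A_\tau^\star$ are equivalent, $\alpha\equiv\beta$, iff they coincide after deleting all occurrences of $\tau$. For $\alpha\in A^\star$, $\mathcal{C}^{\mathrm{w}}(s,\alpha)$ is the set of computations $c$ from $s$ with $\mathrm{tr}(c)\equiv\alpha$ that are not proper prefixes of another computation $c'$ from $s$ with $\mathrm{tr}(c')\equiv\alpha$. Processes $s,t$ are weak probabilistic trace equivalent iff for every $\mathcal{Z}_s\in\mathrm{res}(s)$ (initial state $z_s$) there is $\mathcal{Z}_t\in\mathrm{res}(t)$ (initial state $z_t$) with $\Pr(\mathcal{C}^{\mathrm{w}}(z_s,\alpha))=\Pr(\mathcal{C}^{\mathrm{w}}(z_t,\alpha))$ for all $\alpha\in A^\star$, and symmetrically with $s,t$ swapped. The trace distribution of a resolution is $TD_{\mathcal{Z}}(\alpha)=\Pr(\mathcal{C}_{\max}(z,\alpha))$, $\alpha\in A_\tau^\star$. Kantorovich lifting of a 1-bounded (pseudo)metric $d$ on $X$: $\mathcal{K}(d)(\pi,\pi')=\min_{\omega}\sum_{x,y}\omega(x,y)d(x,y)$ over couplings $\omega$ of $\pi,\pi'$. Hausdorff lifting: $\mathcal{H}(\hat d)(\Pi_1,\Pi_2)=\max\{\sup_{\pi_1\in\Pi_1}\inf_{\pi_2\in\Pi_2}\hat d(\pi_1,\pi_2),\sup_{\pi_2\in\Pi_2}\inf_{\pi_1\in\Pi_1}\hat d(\pi_2,\pi_1)\}$, with $\inf\emptyset=1,\sup\emptyset=0$. Let $d_{\mathrm{w}}(\alpha,\beta)=0$ if $\alpha\equiv\beta$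 and $1$ otherwise; $D_{\mathrm{w}}(\mathcal{Z}_1,\mathcal{Z}_2)=\mathcal{K}(d_{\mathrm{w}})(TD_{\mathcal{Z}_1},TD_{\mathcal{Z}_2})$; the weak trace metric is $\mathbf{d}^{\mathrm{w}}(s,t)=\mathcal{H}(D_{\mathrm{w}})(\mathrm{res}(s),\mathrm{res}(t))$. *)

From Stdlib Require Import Reals List ClassicalEpsilon.
Import ListNotations.
Open Scope R_scope.
Set Implicit Arguments.

(* Sum of f over a (finite) set P; 0 if P is not finite.  Well defined,
   since the sum does not depend on the chosen duplicate-free enumeration. *)
Definition fsum {T : Type} (P : T -> Prop) (f : T -> R) : R :=
  match excluded_middle_informative
          (exists l : list T, NoDup l /\ forall x, P x <-> In x l) with
  | left H => fold_right Rplus 0 (map f (proj1_sig (constructive_indefinite_description _ H)))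
  | right _ => 0
  end.

Definition is_glb (E : R -> Prop) (m : R) : Prop :=
  (forall x, E x -> m <= x) /\ (forall b, (forall x, E x -> b <= x) -> b <= m).

(* supremum, with sup of the empty set = 0 *)
Definition Rsup0 (E : R -> Prop) : R :=
  match excluded_middle_informative (exists m, is_lub E m) with
  | left H => proj1_sig (constructive_indefinite_description _ H)
  | right _ => 0
  end.

(* infimum, with inf of the empty set = 1 *)
Definition Rinf1 (E : R -> Prop) : R :=
  match excluded_middle_informative (exists m, is_glb E m) with
  | left H => proj1_sig (constructive_indefinite_description _ H)
  | right _ => 1
  end.

Definition is_dist {X : Type} (mu : X -> R) : Prop :=
  (forall x, 0 <= mu x) /\
  exists l : list X, NoDup l /\ (forall x, mu x <> 0 -> In x l) /\
                     fold_right Rplus 0 (map mu l) = 1.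

(* ---------- PTS notions (A_tau = option Act, None = tau) ---------- *)

Section PTSDefs.
Variable Act : Type.
Definition actt := option Act.
Definition trace := list actt.

Variable X : Type.
Variable tr : X -> actt -> (X -> R) -> Prop.

Definition step := (actt * (X -> R) * X)%type.

(* c = x -a1-> x1 ... -an-> xn, represented by the list of (a_i, pi_i, x_i) *)
Inductive is_comp : X -> list step -> Prop :=
| comp_nil : forall x, is_comp x []
| comp_cons : forall x a pi y c,
    tr x a pi -> 0 < pi y -> is_comp y c -> is_comp x ((a, pi, y) :: c).

Definition prob (c : list step) : R :=
  fold_right Rmult 1 (map (fun st => (snd (fst st)) (snd st)) c).

Definition tr_of (c : list step) : trace := map (fun st => fst (fst st)) c.

Definition strict_prefix (c c' : list step) : Prop :=
  exists d, d <> [] /\ c' = c ++ d.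

Definition maximal (x : X) (c : list step) : Prop :=
  forall c', is_comp x c' -> ~ strict_prefix c c'.

Definition Cmax (x : X) (alpha : trace) (c : list step) : Prop :=
  is_comp x c /\ tr_of c = alpha /\ maximal x c.

Definition erase (alpha : trace) : list Act :=
  flat_map (fun o => match o with Some a => [a] | None => [] end) alpha.

Definition tr_equiv (alpha beta : trace) : Prop := erase alpha = erase beta.

Definition Cw (x : X) (alpha : list Act) (c : list step) : Prop :=
  is_comp x c /\ tr_equiv (tr_of c) (map (@Some Act) alpha) /\
  forall c', is_comp x c' -> tr_equiv (tr_of c') (map (@Some Act) alpha) ->
             ~ strict_prefix c c'.

Definition image_finite (x : X) : Prop :=
  forall a, exists l : list (X -> R), forall pi, tr x a pi -> In pi l.

Definition finite_proc (x : X) : Prop :=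
  exists N, forall c, is_comp x c -> (length c <= N)%nat.

End PTSDefs.

Record resolution (Act S : Type) (trans : S -> option Act -> (S -> R) -> Prop)
       (s : S) := {
  rZ : Type;
  r_countable : exists f : rZ -> nat, forall z1 z2, f z1 = f z2 -> z1 = z2;
  rtr : rZ -> option Act -> (rZ -> R) -> Prop;
  rcorr : rZ -> S;
  rinit : rZ;
  rinit_corr : rcorr rinit = s;
  r_dist : forall z a pi, rtr z a pi -> is_dist pi;
  rinit_no_target : forall z a pi, rtr z a pi -> ~ (0 < pi rinit);
  r_reached : forall z, z <> rinit ->
      exists z' a pi, z' <> z /\ rtr z' a pi /\ 0 < pi z;
  r_match : forall z a pi, rtr z a pi ->
      exists pi', trans (rcorr z) a pi' /\ forall z', pi z' = pi' (rcorr z');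
  r_det : forall z a a' pi pi', rtr z a pi -> rtr z a' pi' -> a = a' /\ pi = pi'
}.

Section Metric.
Variables (Act S : Type) (trans : S -> option Act -> (S -> R) -> Prop).

Definition PrW (s : S) (Z : resolution trans s) (alpha : list Act) : R :=
  fsum (Cw (rtr Z) (rinit Z) alpha) (@prob Act (rZ Z)).

Definition weak_trace_equiv (s t : S) : Prop :=
  (forall Z1 : resolution trans s, exists Z2 : resolution trans t,
       forall alpha, PrW Z1 alpha = PrW Z2 alpha) /\
  (forall Z2 : resolution trans t, exists Z1 : resolution trans s,
       forall alpha, PrW Z2 alpha = PrW Z1 alpha).

Definition TD (s : S) (Z : resolution trans s) (alpha : trace Act) : R :=
  fsum (Cmax (rtr Z) (rinit Z) alpha) (@prob Act (rZ Z)).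

Definition coupling {X : Type} (p q : X -> R) (w : X * X -> R) : Prop :=
  (forall xy, 0 <= w xy) /\
  (exists l : list (X * X), forall xy, w xy <> 0 -> In xy l) /\
  (forall x, fsum (fun y => w (x, y) <> 0) (fun y => w (x, y)) = p x) /\
  (forall y, fsum (fun x => w (x, y) <> 0) (fun x => w (x, y)) = q y).

Definition kantorovich {X : Type} (d : X -> X -> R) (p q : X -> R) : R :=
  Rinf1 (fun r => exists w, coupling p q w /\
           r = fsum (fun xy => w xy <> 0) (fun xy => w xy * d (fst xy) (snd xy))).

Definition d_w (alpha beta : trace Act) : R :=
  if excluded_middle_informative (tr_equiv alpha beta) then 0 else 1.

Definition D_w (s t : S) (Z1 : resolution trans s) (Z2 : resolution trans t) : R :=
  kantorovich d_w (TD Z1) (TD Z2).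

Definition weak_trace_metric (s t : S) : R :=
  Rmax (Rsup0 (fun r => exists Z1 : resolution trans s,
                  r = Rinf1 (fun r' => exists Z2 : resolution trans t, r' = D_w Z1 Z2)))
       (Rsup0 (fun r => exists Z2 : resolution trans t,
                  r = Rinf1 (fun r' => exists Z1 : resolution trans s, r' = D_w Z2 Z1))).

End Metric.

(* If every resolution of [s] has a resolution of [t] with the same weak trace probabilities,
   couple the two trace distributions independently within each class of traces with the same
   visible part: the mass of a class is determined by the weak probabilities, so this is a
   coupling of Kantorovich cost 0.

   Conversely, a small Kantorovich distance forces all weak probabilities to be close. Fix a
   resolution [Z1] of [s]. A resolution of [t] close enough to [Z1] cannot perform letters that
   [Z1] never performs, since the first such letter would carry the weight of one of the finitely
   many computations of [t] over the alphabet of [Z1]. Its weak probabilities are then sums of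
   the probabilities of these computations, which, being at most 1, range over a finite set; so do
   those of [Z1]. Hence if the infimum of the distances to [Z1] is 0, it is attained. *)

From Stdlib Require Import Reals List Lra Lia Permutation ClassicalEpsilon.
Import ListNotations.
Open Scope R_scope.
Set Implicit Arguments.

(** * Finite sums *)

Definition lsum {T : Type} (f : T -> R) (l : list T) : R :=
  fold_right Rplus 0 (map f l).

Lemma lsum_nil {T} (f : T -> R) : lsum f [] = 0.
Proof. reflexivity. Qed.

Lemma lsum_cons {T} (f : T -> R) x l : lsum f (x :: l) = f x + lsum f l.
Proof. reflexivity. Qed.

Lemma lsum_ext {T} (f g : T -> R) l :
  (forall x, In x l -> f x = g x) -> lsum f l = lsum g l.
Proof.
  induction l as [|x l IH]; intros H; [reflexivity|].
  rewrite !lsum_cons, (H x), IH; simpl; auto.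
  intros; apply H; simpl; auto.
Qed.

Lemma lsum_app {T} (f : T -> R) l1 l2 : lsum f (l1 ++ l2) = lsum f l1 + lsum f l2.
Proof. induction l1; unfold lsum in *; simpl; [|rewrite IHl1]; lra. Qed.

Lemma lsum_perm {T} (f : T -> R) l1 l2 : Permutation l1 l2 -> lsum f l1 = lsum f l2.
Proof. induction 1; unfold lsum in *; simpl; lra. Qed.

Lemma lsum_add {T} (f g : T -> R) l : lsum (fun x => f x + g x) l = lsum f l + lsum g l.
Proof. induction l; unfold lsum in *; simpl; lra. Qed.

Lemma lsum_sub {T} (f g : T -> R) l : lsum (fun x => f x - g x) l = lsum f l - lsum g l.
Proof. induction l; unfold lsum in *; simpl; lra. Qed.

Lemma lsum_mul_l {T} (f : T -> R) k l : lsum (fun x => k * f x) l = k * lsum f l.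
Proof. induction l; unfold lsum in *; simpl; lra. Qed.

Lemma lsum_map {T U} (f : U -> R) (g : T -> U) l : lsum f (map g l) = lsum (fun x => f (g x)) l.
Proof. unfold lsum. rewrite map_map. reflexivity. Qed.

Lemma lsum_const {T} (k : R) (l : list T) : lsum (fun _ => k) l = INR (length l) * k.
Proof.
  induction l; [unfold lsum; simpl; lra|].
  rewrite lsum_cons, IHl. simpl length. rewrite S_INR. lra.
Qed.

Lemma lsum_eq0 {T} (f : T -> R) l : (forall x, In x l -> f x = 0) -> lsum f l = 0.
Proof. intros H. rewrite (lsum_ext _ (fun _ => 0)), lsum_const by auto. lra. Qed.

Lemma lsum_le {T} (f g : T -> R) l : (forall x, In x l -> f x <= g x) -> lsum f l <= lsum g l.
Proof.
  induction l as [|x l IH]; intros H; [unfold lsum; simpl; lra|].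
  rewrite !lsum_cons. apply Rplus_le_compat; [apply H; simpl; auto|].
  apply IH. intros; apply H; simpl; auto.
Qed.

Lemma lsum_nonneg {T} (f : T -> R) l : (forall x, In x l -> 0 <= f x) -> 0 <= lsum f l.
Proof. intros H. rewrite <- (lsum_eq0 (fun _ => 0) l) by auto. apply lsum_le, H. Qed.

Lemma Rabs_lsum_le {T} (f : T -> R) l : Rabs (lsum f l) <= lsum (fun x => Rabs (f x)) l.
Proof.
  induction l; rewrite ?lsum_cons; [unfold lsum; simpl; rewrite Rabs_R0; lra|].
  eapply Rle_trans; [apply Rabs_triang | lra].
Qed.

Lemma lsum_comm {T U} (f : T -> U -> R) l1 l2 :
  lsum (fun x => lsum (f x) l2) l1 = lsum (fun y => lsum (fun x => f x y) l1) l2.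
Proof.
  induction l1 as [|x l1 IH]; [rewrite lsum_nil, lsum_eq0; auto|].
  rewrite lsum_cons, IH, <- lsum_add. apply lsum_ext. intros y _. reflexivity.
Qed.

Lemma lsum_ge_term {T} (f : T -> R) l x :
  NoDup l -> In x l -> (forall y, In y l -> 0 <= f y) -> f x <= lsum f l.
Proof.
  induction l as [|a l IH]; intros ND Hx H; [destruct Hx|].
  inversion ND; subst. rewrite lsum_cons. destruct Hx as [<-|Hx].
  - assert (0 <= lsum f l) by (apply lsum_nonneg; intros; apply H; right; auto). lra.
  - assert (0 <= f a) by (apply H; left; auto).
    assert (f x <= lsum f l) by (apply IH; auto; intros; apply H; right; auto). lra.
Qed.

Definition dec (P : Prop) : {P} + {~ P} := excluded_middle_informative P.

Definition indic (P : Prop) : R := if dec P then 1 else 0.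

Lemma indic_bounds P : 0 <= indic P <= 1.
Proof. unfold indic; destruct (dec P); lra. Qed.

Lemma indic_iff (P Q : Prop) : (P <-> Q) -> indic P = indic Q.
Proof. unfold indic. intros H. destruct (dec P), (dec Q); tauto. Qed.

Lemma indic_true (P : Prop) : P -> indic P = 1.
Proof. unfold indic. destruct (dec P); tauto. Qed.

Lemma indic_false (P : Prop) : ~ P -> indic P = 0.
Proof. unfold indic. destruct (dec P); tauto. Qed.

Definition cfilter {T} (P : T -> Prop) (l : list T) : list T :=
  filter (fun x => if dec (P x) then true else false) l.

Lemma in_cfilter {T} (P : T -> Prop) l x : In x (cfilter P l) <-> In x l /\ P x.
Proof.
  unfold cfilter. rewrite filter_In.
  destruct (dec (P x)); intuition discriminate.
Qed.

Lemma NoDup_cfilter {T} (P : T -> Prop) l : NoDup l -> NoDup (cfilter P l).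
Proof. apply NoDup_filter. Qed.

Lemma lsum_cfilter_drop {T} (f : T -> R) (P : T -> Prop) l :
  (forall x, In x l -> ~ P x -> f x = 0) -> lsum f (cfilter P l) = lsum f l.
Proof.
  induction l as [|a l IH]; intros H; [reflexivity|]. unfold cfilter in *; simpl.
  destruct (dec (P a)) as [Pa|Na]; rewrite ?lsum_cons, IH by (intros; apply H; simpl; auto).
  - reflexivity.
  - rewrite (H a) by (simpl; auto). lra.
Qed.

Lemma lsum_cfilter_le {T} (f : T -> R) (P : T -> Prop) l :
  (forall x, In x l -> 0 <= f x) -> lsum f (cfilter P l) <= lsum f l.
Proof.
  induction l as [|a l IH]; intros H; [unfold lsum; simpl; lra|]. unfold cfilter in *; simpl.
  assert (0 <= f a) by (apply H; simpl; auto).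
  assert (lsum f (cfilter P l) <= lsum f l) by (apply IH; intros; apply H; simpl; auto).
  destruct (dec (P a)); rewrite ?lsum_cons; unfold cfilter in *; lra.
Qed.

Definition cnodup {T} (l : list T) : list T := nodup (fun x y => dec (x = y)) l.

Lemma cnodup_In {T} (l : list T) x : In x (cnodup l) <-> In x l.
Proof. apply nodup_In. Qed.

Lemma NoDup_cnodup {T} (l : list T) : NoDup (cnodup l).
Proof. apply NoDup_nodup. Qed.

Lemma lsum_indic_single {T} (B : list T) x :
  NoDup B -> In x B -> lsum (fun y => indic (x = y)) B = 1.
Proof.
  induction B as [|a B IH]; intros ND H; [destruct H|].
  inversion ND; subst. rewrite lsum_cons. destruct H as [->|H].
  - rewrite indic_true, lsum_eq0 by (reflexivity || (intros y Hy; apply indic_false; intros ->;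
      contradiction)). lra.
  - rewrite indic_false, IH by (auto; intros ->; contradiction). lra.
Qed.

Lemma lsum_fibres {T K} (key : T -> K) (F : T -> R) (L : list T) (X : list K) :
  NoDup X -> (forall c, In c L -> In (key c) X) ->
  lsum (fun x => lsum F (cfilter (fun c => key c = x) L)) X = lsum F L.
Proof.
  intros ND. induction L as [|a L IH]; intros H; [apply lsum_eq0; reflexivity|].
  rewrite lsum_cons, <- IH by (intros; apply H; right; auto).
  assert (Hk : In (key a) X) by (apply H; left; auto).
  transitivity (lsum (fun x => F a * indic (key a = x)
                               + lsum F (cfilter (fun c => key c = x) L)) X).
  { apply lsum_ext. intros x _. unfold cfilter, indic; simpl.
    destruct (dec (key a = x)); rewrite ?lsum_cons; lra. }
  rewrite lsum_add, lsum_mul_l, lsum_indic_single; auto. lra.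
Qed.

Definition finite {T} (P : T -> Prop) : Prop := exists L, forall x, P x -> In x L.

Definition enumerates {T} (P : T -> Prop) (l : list T) : Prop :=
  NoDup l /\ forall x, P x <-> In x l.

Lemma finite_enumerates {T} (P : T -> Prop) : finite P -> exists l, enumerates P l.
Proof.
  intros [L H]. exists (cnodup (cfilter P L)). split; [apply NoDup_cnodup|].
  intros x. rewrite cnodup_In, in_cfilter. firstorder.
Qed.

Lemma finite_sub {T} (P Q : T -> Prop) : finite Q -> (forall x, P x -> Q x) -> finite P.
Proof. intros [L H] H'. exists L; auto. Qed.

Lemma finite_image {T U} (g : T -> U) (P : T -> Prop) :
  finite P -> finite (fun u => exists x, u = g x /\ P x).
Proof. intros [L H]. exists (map g L). intros u [x [-> Hx]]. apply in_map; auto. Qed.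

Lemma finite_union_list {T U} (l : list U) (P : U -> T -> Prop) :
  (forall y, In y l -> finite (P y)) -> finite (fun c => exists y, In y l /\ P y c).
Proof.
  induction l as [|a l IH]; intros H; [exists []; intros c [y [[] _]]|].
  destruct (H a (or_introl eq_refl)) as [L1 H1].
  destruct IH as [L2 H2]; [intros; apply H; right; auto|].
  exists (L1 ++ L2). intros c [y [[<-|Hy] Hc]]; apply in_app_iff; eauto.
Qed.

Lemma fsum_enum {T} (P : T -> Prop) f l : enumerates P l -> fsum P f = lsum f l.
Proof.
  intros [ND H]. unfold fsum. destruct (excluded_middle_informative _) as [E|E].
  - destruct (constructive_indefinite_description _ E) as [l' [ND' H']]; simpl.
    apply lsum_perm, NoDup_Permutation; auto. intros; rewrite <- H, H'; tauto.
  - exfalso; apply E; exists l; auto.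
Qed.

Lemma fsum_cases {T} (P : T -> Prop) f :
  (exists l, enumerates P l /\ fsum P f = lsum f l) \/
  (~ (exists l, enumerates P l) /\ fsum P f = 0).
Proof.
  destruct (classic (exists l, enumerates P l)) as [[l Hl]|N].
  - left. exists l. split; auto. apply fsum_enum; auto.
  - right. split; auto. unfold fsum. destruct (excluded_middle_informative _); [|reflexivity].
    exfalso; apply N; assumption.
Qed.

Lemma fsum_ext {T} (P Q : T -> Prop) f g :
  (forall x, P x <-> Q x) -> (forall x, P x -> f x = g x) -> fsum P f = fsum Q g.
Proof.
  intros H1 H2. destruct (fsum_cases P f) as [[l [[ND Hl] ->]]|[N ->]].
  - rewrite (fsum_enum g (P := Q) (l := l)). apply lsum_ext; intros; apply H2, Hl; auto.
    split; auto. intros; rewrite <- H1; auto.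
  - destruct (fsum_cases Q g) as [[l [[ND Hl] _]]|[_ ->]]; auto.
    exfalso; apply N. exists l. split; auto. intros; rewrite H1; auto.
Qed.

Lemma fsum_eq0 {T} (P : T -> Prop) f : (forall x, P x -> f x = 0) -> fsum P f = 0.
Proof.
  intros H. destruct (fsum_cases P f) as [[l [[ND Hl] ->]]|[_ ->]]; auto.
  apply lsum_eq0; intros; apply H, Hl; auto.
Qed.

Lemma fsum_empty {T} (P : T -> Prop) f : (forall x, ~ P x) -> fsum P f = 0.
Proof. intros H; apply fsum_eq0; intros x Hx; destruct (H x Hx). Qed.

Lemma fsum_single {T} (P : T -> Prop) f a : (forall x, P x <-> x = a) -> fsum P f = f a.
Proof.
  intros H. rewrite (fsum_enum f (l := [a])); [unfold lsum; simpl; lra|].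
  split; [repeat constructor; auto|]. intros x; rewrite H; simpl; intuition.
Qed.

Lemma fsum_mul_l {T} (P : T -> Prop) f k : fsum P (fun x => k * f x) = k * fsum P f.
Proof.
  destruct (fsum_cases P f) as [[l [Hl ->]]|[N ->]].
  - rewrite (fsum_enum _ Hl). apply lsum_mul_l.
  - destruct (fsum_cases P (fun x => k * f x)) as [[l [Hl _]]|[_ ->]]; [|lra].
    destruct (N (ex_intro _ l Hl)).
Qed.

Lemma fsum_nonneg {T} (P : T -> Prop) f : (forall x, P x -> 0 <= f x) -> 0 <= fsum P f.
Proof.
  intros H. destruct (fsum_cases P f) as [[l [[ND Hl] ->]]|[_ ->]]; [|lra].
  apply lsum_nonneg; intros; apply H, Hl; auto.
Qed.

Lemma fsum_disjoint_union {T} (P Q : T -> Prop) f :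
  finite P -> finite Q -> (forall x, P x -> Q x -> False) ->
  fsum (fun x => P x \/ Q x) f = fsum P f + fsum Q f.
Proof.
  intros FP FQ D.
  destruct (finite_enumerates FP) as [l1 [N1 H1]].
  destruct (finite_enumerates FQ) as [l2 [N2 H2]].
  rewrite (fsum_enum f (P := P) (l := l1)), (fsum_enum f (P := Q) (l := l2)) by (split; auto).
  rewrite (fsum_enum f (l := l1 ++ l2)); [apply lsum_app|]. split.
  - apply NoDup_app; auto. intros x I1 I2. eapply D; [apply H1 | apply H2]; eauto.
  - intros x; rewrite in_app_iff, H1, H2; tauto.
Qed.

Lemma fsum_injective_image {T U} (g : T -> U) (P : T -> Prop) f :
  (forall x y, g x = g y -> x = y) -> finite P ->
  fsum (fun u => exists x, u = g x /\ P x) f = fsum P (fun x => f (g x)).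
Proof.
  intros Inj FP. destruct (finite_enumerates FP) as [l [N H]].
  rewrite (fsum_enum _ (P := P) (l := l)) by (split; auto).
  rewrite (fsum_enum f (l := map g l)); [apply lsum_map|].
  split; [apply FinFun.Injective_map_NoDup; auto|].
  intros u. rewrite in_map_iff. split.
  - intros [x [-> Hx]]. exists x. split; auto. apply H; auto.
  - intros [x [<- Hx]]. exists x. split; auto. apply H; auto.
Qed.

Lemma dist_support {T} (pi : T -> R) :
  is_dist pi -> exists l, NoDup l /\ (forall y, In y l <-> 0 < pi y) /\ lsum pi l = 1.
Proof.
  intros [Hnn [l [ND [Hin Hs]]]]. exists (cfilter (fun y => 0 < pi y) l).
  split; [apply NoDup_cfilter; auto|split].
  - intros y; rewrite in_cfilter. split; [tauto|]. intros Hp; split; auto. apply Hin; lra.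
  - rewrite lsum_cfilter_drop; [exact Hs|]. intros x _ Hx. specialize (Hnn x). lra.
Qed.

(** * Computations *)

Lemma dist_has_support {T} (pi : T -> R) : is_dist pi -> exists y, 0 < pi y.
Proof.
  intros D. destruct (dist_support D) as [[|y l] [_ [Hl Hs]]].
  - unfold lsum in Hs; simpl in Hs; lra.
  - exists y. apply Hl; left; auto.
Qed.

Lemma erase_map_Some {A} (al : list A) : erase (map (@Some A) al) = al.
Proof. induction al; simpl; f_equal; auto. Qed.

Definition prefix {A} (al dl : list A) : Prop := exists r, dl = al ++ r.

Lemma strict_prefix_nil {A X} (c : list (step A X)) : strict_prefix [] c <-> c <> [].
Proof. split; [intros [d [Hd ->]]; auto | intros H; exists c; auto]. Qed.

Lemma strict_prefix_cons {A X} (st : step A X) c c3 :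
  strict_prefix (st :: c) c3 <-> exists c4, c3 = st :: c4 /\ strict_prefix c c4.
Proof.
  split.
  - intros [d [Hd ->]]. exists (c ++ d). split; auto. exists d; auto.
  - intros [c4 [-> [d [Hd ->]]]]. exists d; auto.
Qed.

Lemma prefix_nil_r {A} (al : list A) : prefix al [] <-> al = [].
Proof.
  split; [intros [r Hr]; destruct al; [reflexivity | discriminate] | intros ->; exists []; auto].
Qed.

Lemma prefix_cons {A} (e b : A) al dl : prefix (e :: al) (b :: dl) <-> e = b /\ prefix al dl.
Proof.
  split.
  - intros [r Hr]. injection Hr as -> ->. split; [reflexivity | exists r; auto].
  - intros [-> [r ->]]. exists r; auto.
Qed.

Lemma indic_prefix_cons {A} (e b : A) al dl :
  indic (prefix (e :: al) (b :: dl)) = indic (e = b) * indic (prefix al dl).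
Proof.
  unfold indic. destruct (dec (prefix _ _)) as [H|H]; rewrite prefix_cons in H;
    destruct (dec (e = b)), (dec (prefix al dl)); try lra; tauto.
Qed.

Definition letters_in {Act X} (F : list Act) (c : list (step Act X)) : Prop :=
  forall e, In e (erase (tr_of c)) -> In e F.

Lemma letters_in_cons {Act X} F (a : actt Act) pi (y : X) c :
  letters_in F ((a, pi, y) :: c) <-> letters_in F c /\ (forall e, a = Some e -> In e F).
Proof.
  unfold letters_in. destruct a as [b|]; simpl; split.
  - intros H. split; [intros; apply H; right; auto|].
    intros e E. injection E as <-. apply H; left; auto.
  - intros [H1 H2] e [<-|He]; auto.
  - intros H. split; [auto | discriminate].
  - tauto.
Qed.

Lemma first_letter_outside {Act X} (F : list Act) (c : list (step Act X)) : ~ letters_in F c ->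
  exists c0 b pi y rest, c = c0 ++ (Some b, pi, y) :: rest /\ letters_in F c0 /\ ~ In b F.
Proof.
  induction c as [|[[a pi] y] c IH]; intros H.
  - destruct H. intros e [].
  - destruct (classic (forall e, a = Some e -> In e F)) as [Ha|Ha].
    + destruct IH as [c0 [b [pi' [y' [rest [-> [O N]]]]]]].
      { intros O. apply H, letters_in_cons; auto. }
      exists ((a, pi, y) :: c0), b, pi', y', rest. repeat split; auto. apply letters_in_cons; auto.
    + destruct a as [e|]; [|destruct Ha; discriminate].
      exists [], e, pi, y, c. split; [reflexivity|]. split; [intros e' []|].
      intros I. apply Ha. intros e' E. injection E as <-. exact I.
Qed.

Section Computations.
Variables (Act X : Type) (tr : X -> actt Act -> (X -> R) -> Prop).

Lemma is_comp_cons z a pi y c :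
  is_comp tr z ((a, pi, y) :: c) <-> tr z a pi /\ 0 < pi y /\ is_comp tr y c.
Proof. split; [intros H; inversion H; subst; auto | intros [T [P C]]; econstructor; eauto]. Qed.

Lemma is_comp_inv z c : is_comp tr z c ->
  c = [] \/ exists a pi y c', c = (a, pi, y) :: c' /\ tr z a pi /\ 0 < pi y /\ is_comp tr y c'.
Proof. intros H; inversion H; subst; [left | right]; auto. do 4 eexists; eauto. Qed.

Lemma is_comp_app_l z c1 c2 : is_comp tr z (c1 ++ c2) -> is_comp tr z c1.
Proof.
  revert z. induction c1 as [|[[a pi] y] c1 IH]; intros z C; [constructor|].
  apply is_comp_cons in C as [T [P C]]. apply is_comp_cons; auto.
Qed.

Lemma prob_pos z c : is_comp tr z c -> 0 < prob c.
Proof. induction 1; unfold prob; simpl; [lra|]. fold (prob c). apply Rmult_lt_0_compat; lra. Qed.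

Lemma prob_nonneg z c : is_comp tr z c -> 0 <= prob c.
Proof. intros C. apply Rlt_le, (prob_pos C). Qed.

End Computations.

(* The properties of a resolution, viewed as a PTS in its own right. *)
Section Deterministic.
Variables (Act X : Type) (tr : X -> actt Act -> (X -> R) -> Prop).
Hypothesis Hdist : forall z a pi, tr z a pi -> is_dist pi.
Hypothesis Hdet : forall z a a' pi pi', tr z a pi -> tr z a' pi' -> a = a' /\ pi = pi'.
Hypothesis Hdepth : forall z, exists n, forall c, is_comp tr z c -> (length c <= n)%nat.

Definition terminal (z : X) : Prop := forall a pi, ~ tr z a pi.

Definition maxcomp (z : X) (c : list (step Act X)) : Prop := is_comp tr z c /\ maximal tr z c.

Definition Emax (z : X) (h : trace Act -> R) : R :=
  fsum (maxcomp z) (fun c => prob c * h (tr_of c)).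

Definition Pw (z : X) (al : list Act) : R := fsum (Cw tr z al) (@prob Act X).

Lemma depth_ind (Q : X -> Prop) :
  (forall z, (forall a pi y, tr z a pi -> 0 < pi y -> Q y) -> Q z) -> forall z, Q z.
Proof.
  intros H z. destruct (Hdepth z) as [n Hn]. revert z Hn.
  induction n as [|n IH]; intros z Hn; apply H; intros a pi y T P.
  - assert (C : is_comp tr z [(a, pi, y)]) by (econstructor; eauto; constructor).
    apply Hn in C. simpl in C. lia.
  - apply IH. intros c Hc.
    assert (C : is_comp tr z ((a, pi, y) :: c)) by (econstructor; eauto).
    apply Hn in C. simpl in C. lia.
Qed.

Lemma terminal_or_step z : terminal z \/ exists a pi, tr z a pi.
Proof.
  destruct (classic (exists a pi, tr z a pi)) as [H|N]; [right; exact H|].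
  left. intros a pi T. apply N; eauto.
Qed.

Lemma finite_first_step (a : actt Act) pi (l : list X) (P : X -> list (step Act X) -> Prop) :
  (forall y, In y l -> finite (P y)) ->
  finite (fun c => exists y c', c = (a, pi, y) :: c' /\ In y l /\ P y c').
Proof.
  intros H. eapply finite_sub.
  - apply (finite_union_list l (fun y c => exists c', c = (a, pi, y) :: c' /\ P y c')).
    intros y Hy. apply (finite_image (fun c' => (a, pi, y) :: c')); auto.
  - intros c [y [c' [-> [Hy Hc]]]]. exists y; split; auto. exists c'; auto.
Qed.

Lemma fsum_first_step (a : actt Act) pi (l : list X) (P : X -> list (step Act X) -> Prop) f :
  NoDup l -> (forall y, In y l -> finite (P y)) ->
  fsum (fun c => exists y c', c = (a, pi, y) :: c' /\ In y l /\ P y c') f =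
  lsum (fun y => fsum (P y) (fun c' => f ((a, pi, y) :: c'))) l.
Proof.
  induction l as [|y0 l IH]; intros ND H.
  - rewrite lsum_nil. apply fsum_empty. intros c [y [c' [_ [[] _]]]].
  - inversion ND; subst. rewrite lsum_cons, <- IH by (auto; intros; apply H; right; auto).
    rewrite (fsum_ext _ (fun c => (exists c', c = (a, pi, y0) :: c' /\ P y0 c') \/
                        (exists y c', c = (a, pi, y) :: c' /\ In y l /\ P y c')) f f).
    + rewrite fsum_disjoint_union.
      * f_equal. apply (fsum_injective_image (fun c' => (a, pi, y0) :: c')).
        -- intros x y E; inversion E; auto.
        -- apply H; left; auto.
      * apply finite_image, H; left; auto.
      * apply finite_first_step. intros; apply H; right; auto.
      * intros c [c' [-> _]] [y [c'' [E [Hy _]]]]. inversion E; subst. contradiction.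
    + intros c. split.
      * intros [y [c' [-> [[<-|Hy] Hc]]]]; [left | right]; eauto 6.
      * intros [[c' [-> Hc]] | [y [c' [-> [Hy Hc]]]]];
          [exists y0, c' | exists y, c']; repeat split; simpl; auto.
    + auto.
Qed.

Lemma comps_finite z : finite (is_comp tr z).
Proof.
  revert z. apply depth_ind. intros z IH.
  destruct (terminal_or_step z) as [N | [a [pi T]]].
  - exists [[]]. intros c Hc.
    destruct (is_comp_inv Hc) as [-> | [a' [pi' [y [c' [-> [T' _]]]]]]]; [left; auto|].
    destruct (N _ _ T').
  - destruct (dist_support (Hdist T)) as [l [ND [Hl _]]].
    destruct (finite_first_step a pi l (is_comp tr)) as [L HL].
    { intros y Hy. eapply IH; eauto. apply Hl; auto. }
    exists ([] :: L). intros c Hc.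
    destruct (is_comp_inv Hc) as [-> | [a' [pi' [y [c' [-> [T' [P C]]]]]]]]; [left; auto|].
    right. destruct (Hdet T T') as [<- <-]. apply HL.
    exists y, c'. repeat split; auto. apply Hl; auto.
Qed.

Lemma maxcomp_terminal z c : terminal z -> (maxcomp z c <-> c = []).
Proof.
  intros N. split.
  - intros [C _]. destruct (is_comp_inv C) as [-> | [a [pi [y [c' [_ [T _]]]]]]]; auto.
    destruct (N _ _ T).
  - intros ->. split; [constructor|]. intros c' C' Hs. apply strict_prefix_nil in Hs.
    destruct (is_comp_inv C') as [-> | [a [pi [y [c'' [_ [T _]]]]]]]; [auto|].
    destruct (N _ _ T).
Qed.

Lemma maxcomp_step z a pi c : tr z a pi ->
  (maxcomp z c <-> exists y c', c = (a, pi, y) :: c' /\ 0 < pi y /\ maxcomp y c').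
Proof.
  intros T. split.
  - intros [C M]. destruct (is_comp_inv C) as [-> | [a' [pi' [y [c' [-> [T' [P C']]]]]]]].
    + exfalso. destruct (dist_has_support (Hdist T)) as [y Hy].
      apply (M [(a, pi, y)]); [econstructor; eauto; constructor|].
      apply strict_prefix_nil; discriminate.
    + destruct (Hdet T T') as [<- <-]. exists y, c'. repeat split; auto.
      intros c'' C'' Hs. apply (M ((a, pi, y) :: c'')); [econstructor; eauto|].
      apply strict_prefix_cons; eauto.
  - intros [y [c' [-> [P [C M]]]]]. split; [econstructor; eauto|].
    intros c'' C'' Hs. apply strict_prefix_cons in Hs as [c4 [-> Hs]].
    apply is_comp_cons in C'' as [_ [_ C4]]. exact (M c4 C4 Hs).
Qed.

Lemma Emax_ext z h1 h2 : (forall b, h1 b = h2 b) -> Emax z h1 = Emax z h2.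
Proof. intros H. apply fsum_ext; [tauto|]. intros c _. rewrite H; auto. Qed.

Lemma Emax_terminal z h : terminal z -> Emax z h = h [].
Proof.
  intros N. unfold Emax. rewrite (@fsum_single _ _ _ []).
  - unfold prob; simpl; lra.
  - intros; apply maxcomp_terminal; auto.
Qed.

Lemma fsum_step a pi l (P : X -> list (step Act X) -> Prop) Q f :
  NoDup l -> (forall y, In y l <-> 0 < pi y) ->
  (forall y, finite (P y)) ->
  (forall c, Q c <-> exists y c', c = (a, pi, y) :: c' /\ 0 < pi y /\ P y c') ->
  fsum Q f = lsum (fun y => fsum (P y) (fun c' => f ((a, pi, y) :: c'))) l.
Proof.
  intros ND Hl FP HQ.
  rewrite (fsum_ext _ (fun c => exists y c', c = (a, pi, y) :: c' /\ In y l /\ P y c') f f).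
  - apply fsum_first_step; auto.
  - intros c. rewrite HQ. split; intros [y [c' [E [Hy Hc]]]]; exists y, c'; rewrite Hl in *; auto.
  - auto.
Qed.

Lemma Emax_step z a pi l h : tr z a pi -> NoDup l -> (forall y, In y l <-> 0 < pi y) ->
  Emax z h = lsum (fun y => pi y * Emax y (fun b => h (a :: b))) l.
Proof.
  intros T ND Hl. unfold Emax. rewrite (fsum_step (a := a) maxcomp _ _ ND Hl).
  - apply lsum_ext. intros y _. rewrite <- fsum_mul_l.
    apply fsum_ext; [tauto|]. intros c _. unfold prob; simpl. lra.
  - intros y. apply (finite_sub _ (comps_finite y)). intros c []; auto.
  - intros c. apply maxcomp_step; auto.
Qed.

Lemma Emax_one z : Emax z (fun _ => 1) = 1.
Proof.
  revert z. apply depth_ind. intros z IH.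
  destruct (terminal_or_step z) as [N | [a [pi T]]]; [apply Emax_terminal; auto|].
  destruct (dist_support (Hdist T)) as [l [ND [Hl Hs]]].
  rewrite (Emax_step _ T ND Hl), <- Hs at 1. apply lsum_ext. intros y Hy.
  rewrite (IH a pi y T) by (apply Hl; auto). lra.
Qed.

Lemma Emax_scale z k h : Emax z (fun b => k * h b) = k * Emax z h.
Proof.
  unfold Emax. rewrite <- fsum_mul_l. apply fsum_ext; [tauto|]. intros c _. lra.
Qed.

Lemma Cw_iff z al c : Cw tr z al c <->
  is_comp tr z c /\ erase (tr_of c) = al /\
  forall c', is_comp tr z c' -> erase (tr_of c') = al -> ~ strict_prefix c c'.
Proof. unfold Cw, tr_equiv. rewrite erase_map_Some. tauto. Qed.

Lemma Cw_terminal z al c : terminal z -> (Cw tr z al c <-> c = [] /\ al = []).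
Proof.
  intros N. rewrite Cw_iff. split.
  - intros [C [E _]]. destruct (is_comp_inv C) as [-> | [a [pi [y [c' [_ [T _]]]]]]].
    + auto.
    + destruct (N _ _ T).
  - intros [-> ->]. split; [constructor|]. split; [reflexivity|].
    intros c' C' _ Hs. apply strict_prefix_nil in Hs.
    destruct (is_comp_inv C') as [-> | [a [pi [y [c'' [_ [T _]]]]]]]; [auto | destruct (N _ _ T)].
Qed.

Lemma Cw_cons z a pi y c al al' : tr z a pi -> 0 < pi y ->
  (forall b, erase (a :: b) = al <-> erase b = al') ->
  (Cw tr z al ((a, pi, y) :: c) <-> Cw tr y al' c).
Proof.
  intros T P Ha. rewrite !Cw_iff, is_comp_cons. simpl tr_of. rewrite Ha. split.
  - intros [[_ [_ C]] [E M]]. repeat split; auto. intros c' C' E' Hs.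
    apply (M ((a, pi, y) :: c')).
    + apply is_comp_cons; auto.
    + apply Ha; auto.
    + apply strict_prefix_cons; eauto.
  - intros [C [E M]]. repeat split; auto. intros c3 C3 E3 Hs.
    apply strict_prefix_cons in Hs as [c4 [-> Hs]].
    apply is_comp_cons in C3 as [_ [_ C4]]. apply (M c4); auto. apply Ha; auto.
Qed.

Lemma Cw_head z a pi al c : tr z a pi -> Cw tr z al c -> c <> [] ->
  exists y c', c = (a, pi, y) :: c' /\ 0 < pi y.
Proof.
  intros T [C _] Hn. destruct (is_comp_inv C) as [-> | [a' [pi' [y [c' [-> [T' [P _]]]]]]]].
  - congruence.
  - destruct (Hdet T T') as [<- <-]. eauto.
Qed.

Lemma Cw_tau z pi al c : tr z None pi ->
  (Cw tr z al c <-> exists y c', c = (None, pi, y) :: c' /\ 0 < pi y /\ Cw tr y al c').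
Proof.
  intros T. split.
  - intros H. destruct c as [|st c'].
    + exfalso. destruct (dist_has_support (Hdist T)) as [y P].
      apply Cw_iff in H as [_ [E M]]. apply (M [(None, pi, y)]).
      * apply is_comp_cons. repeat split; auto. constructor.
      * exact E.
      * apply strict_prefix_nil; discriminate.
    + destruct (Cw_head T H) as [y [c'' [E P]]]; [discriminate|]. rewrite E in *.
      exists y, c''. split; [reflexivity|]. split; [exact P|].
      exact (proj1 (Cw_cons y c'' T P (fun _ => iff_refl _)) H).
  - intros [y [c' [-> [P H]]]]. exact (proj2 (Cw_cons y c' T P (fun _ => iff_refl _)) H).
Qed.

Lemma Cw_vis_nil z b pi c : tr z (Some b) pi -> (Cw tr z [] c <-> c = []).
Proof.
  intros T. split.
  - intros H. destruct c as [|st c']; auto.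
    destruct (Cw_head T H) as [y [c'' [E P]]]; [discriminate|].
    apply Cw_iff in H as [_ [E' _]]. rewrite E in E'. discriminate.
  - intros ->. apply Cw_iff. split; [constructor|]. split; [reflexivity|].
    intros c' C' E' Hs. destruct (is_comp_inv C') as [-> | [a [pi' [y [c'' [-> [T' _]]]]]]].
    + apply strict_prefix_nil in Hs. apply Hs; reflexivity.
    + destruct (Hdet T T') as [<- <-]. discriminate.
Qed.

Lemma Cw_vis_cons z b pi e al c : tr z (Some b) pi ->
  (Cw tr z (e :: al) c <->
   e = b /\ exists y c', c = (Some b, pi, y) :: c' /\ 0 < pi y /\ Cw tr y al c').
Proof.
  intros T.
  assert (Hb : forall b', erase (Some b :: b') = b :: al <-> erase b' = al).
  { intros b'. simpl. split; [intros H; injection H; auto | intros ->; auto]. }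
  split.
  - intros H. destruct c as [|st c'].
    + apply Cw_iff in H as [_ [E _]]. discriminate.
    + destruct (Cw_head T H) as [y [c'' [E P]]]; [discriminate|]. rewrite E in *.
      pose proof H as H'. apply Cw_iff in H' as [_ [E' _]]. injection E' as <- _.
      split; auto. exists y, c''. split; [reflexivity|]. split; [exact P|].
      exact (proj1 (Cw_cons y c'' T P Hb) H).
  - intros [-> [y [c' [-> [P H]]]]]. exact (proj2 (Cw_cons y c' T P Hb) H).
Qed.

Lemma Cw_finite z al : finite (Cw tr z al).
Proof. apply (finite_sub _ (comps_finite z)). intros c []; auto. Qed.

Lemma Pw_terminal z al : terminal z -> Pw z al = indic (al = []).
Proof.
  intros N. unfold Pw, indic. destruct (dec (al = [])) as [->|Hne].
  - rewrite (@fsum_single _ _ _ []); [reflexivity|]. intros c. rewrite Cw_terminal; tauto.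
  - apply fsum_empty. intros c H. apply Cw_terminal in H as [_ H]; auto.
Qed.

Lemma Pw_step z a pi l al al' : tr z a pi -> NoDup l -> (forall y, In y l <-> 0 < pi y) ->
  (forall c, Cw tr z al c <-> exists y c', c = (a, pi, y) :: c' /\ 0 < pi y /\ Cw tr y al' c') ->
  Pw z al = lsum (fun y => pi y * Pw y al') l.
Proof.
  intros T ND Hl HC. unfold Pw. rewrite (fsum_step (a := a) (fun y => Cw tr y al') _ _ ND Hl).
  - apply lsum_ext. intros y _. rewrite <- fsum_mul_l. apply fsum_ext; [tauto | reflexivity].
  - intros; apply Cw_finite.
  - exact HC.
Qed.

Lemma Pw_tau z pi l al : tr z None pi -> NoDup l -> (forall y, In y l <-> 0 < pi y) ->
  Pw z al = lsum (fun y => pi y * Pw y al) l.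
Proof. intros T ND Hl. apply (Pw_step T ND Hl). intros; apply Cw_tau; auto. Qed.

Lemma Pw_vis_nil z b pi : tr z (Some b) pi -> Pw z [] = 1.
Proof.
  intros T. unfold Pw. rewrite (@fsum_single _ _ _ []); [reflexivity|].
  intros c. apply (Cw_vis_nil _ T).
Qed.

Lemma Pw_vis_cons z b pi l e al : tr z (Some b) pi -> NoDup l -> (forall y, In y l <-> 0 < pi y) ->
  Pw z (e :: al) = indic (e = b) * lsum (fun y => pi y * Pw y al) l.
Proof.
  intros T ND Hl. unfold indic at 1. destruct (dec (e = b)) as [->|Hne].
  - rewrite Rmult_1_l. apply (Pw_step T ND Hl). intros c. rewrite (Cw_vis_cons _ _ _ T). tauto.
  - rewrite Rmult_0_l. apply fsum_empty. intros c H. apply (Cw_vis_cons _ _ _ T) in H. tauto.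
Qed.

Lemma Pw_Emax z al : Pw z al = Emax z (fun b => indic (prefix al (erase b))).
Proof.
  revert z al. apply (depth_ind (fun z => forall al, _)). intros z IH al.
  destruct (terminal_or_step z) as [N | [a [pi T]]].
  - rewrite Pw_terminal, Emax_terminal by auto. apply indic_iff. symmetry. apply prefix_nil_r.
  - destruct (dist_support (Hdist T)) as [l [ND [Hl Hs]]].
    destruct a as [b|].
    + destruct al as [|e al].
      * rewrite (Pw_vis_nil T), (Emax_ext _ _ (fun _ => 1)), Emax_one; [reflexivity|].
        intros b'. apply indic_true. exists (erase b'); reflexivity.
      * rewrite (Pw_vis_cons _ _ T ND Hl), (Emax_step _ T ND Hl), <- lsum_mul_l.
        apply lsum_ext. intros y Hy.
        rewrite (Emax_ext _ _ (fun b' => indic (e = b) * indic (prefix al (erase b')))).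
        -- rewrite Emax_scale, (IH _ _ _ T) by (apply Hl; auto). ring.
        -- intros b'. exact (indic_prefix_cons e b al (erase b')).
    + rewrite (Pw_tau _ T ND Hl), (Emax_step _ T ND Hl). apply lsum_ext. intros y Hy.
      rewrite (IH _ _ _ T) by (apply Hl; auto). reflexivity.
Qed.

Lemma Pw_nonneg z al : 0 <= Pw z al.
Proof. apply fsum_nonneg. intros c [C _]. apply (prob_nonneg C). Qed.

Lemma Pw_nil z : Pw z [] = 1.
Proof.
  rewrite Pw_Emax, <- (Emax_one z). apply Emax_ext. intros b.
  apply indic_true. exists (erase b); reflexivity.
Qed.

Lemma prob_le_Pw c0 z b pi y : is_comp tr z (c0 ++ [(Some b, pi, y)]) ->
  prob c0 <= Pw z (erase (tr_of c0) ++ [b]).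
Proof.
  revert z. induction c0 as [|[[a pi0] y0] c0 IH]; intros z C.
  - apply is_comp_cons in C as [T _]. destruct (dist_support (Hdist T)) as [l [ND [Hl Hs]]].
    simpl. rewrite (Pw_vis_cons _ _ T ND Hl), (lsum_ext _ pi), Hs.
    + rewrite indic_true by reflexivity. unfold prob; simpl; lra.
    + intros y' _. rewrite Pw_nil. lra.
  - apply is_comp_cons in C as [T [P C]].
    destruct (dist_support (Hdist T)) as [l [ND [Hl _]]].
    assert (Hy0 : In y0 l) by (apply Hl; auto).
    assert (Hnn : forall al y', In y' l -> 0 <= pi0 y' * Pw y' al).
    { intros al y' Hy'. apply Rmult_le_pos; [apply Rlt_le, Hl; auto | apply Pw_nonneg]. }
    assert (Hlow : pi0 y0 * prob c0 <= lsum (fun y' => pi0 y' * Pw y' (erase (tr_of c0) ++ [b])) l).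
    { eapply Rle_trans; [|apply (lsum_ge_term _ y0 ND Hy0 (Hnn _))].
      apply Rmult_le_compat_l; [lra | eapply IH; eauto]. }
    unfold prob; simpl; fold (prob c0). destruct a as [e|]; simpl.
    + rewrite (Pw_vis_cons _ _ T ND Hl), indic_true by reflexivity. lra.
    + rewrite (Pw_tau _ T ND Hl). exact Hlow.
Qed.

End Deterministic.

(** * Resolutions *)

Section Resolutions.
Variables (Act S : Type) (trans : S -> option Act -> (S -> R) -> Prop).
Hypothesis fin : forall s, finite_proc trans s.

Lemma res_comp_image s (Z : resolution trans s) z c : is_comp (rtr Z) z c ->
  exists c', is_comp trans (rcorr Z z) c' /\ prob c' = prob c /\ tr_of c' = tr_of c.
Proof.
  induction 1 as [z|z a pi y c T P C [c' [C' [P' T']]]].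
  - exists []. repeat split; constructor.
  - destruct (r_match Z _ _ _ T) as [pi' [T'' Hpi]].
    exists ((a, pi', rcorr Z y) :: c'). split; [econstructor; eauto; rewrite <- Hpi; auto|].
    unfold prob, tr_of in *; simpl. rewrite P', T', <- Hpi. auto.
Qed.

Lemma res_depth s (Z : resolution trans s) z :
  exists n, forall c, is_comp (rtr Z) z c -> (length c <= n)%nat.
Proof.
  destruct (fin (rcorr Z z)) as [n Hn]. exists n. intros c C.
  destruct (res_comp_image _ C) as [c' [C' [_ T']]].
  assert (E : length c' = length c).
  { apply (f_equal (@length _)) in T'. unfold tr_of in T'. now rewrite !length_map in T'. }
  rewrite <- E. apply Hn, C'.
Qed.

(* By [lsum_TD], the expectation of [h] under the trace distribution of [Z]. *)
Definition ETD s (Z : resolution trans s) (h : trace Act -> R) : R :=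
  Emax (rtr Z) (rinit Z) h.

Definition Pvis s (Z : resolution trans s) (gm : list Act) : R :=
  ETD Z (fun b => indic (erase b = gm)).

Lemma Pvis_nonneg s (Z : resolution trans s) gm : 0 <= Pvis Z gm.
Proof.
  apply fsum_nonneg. intros c [C _].
  apply Rmult_le_pos; [apply (prob_nonneg C) | apply indic_bounds].
Qed.

Lemma ETD_one s (Z : resolution trans s) : ETD Z (fun _ => 1) = 1.
Proof. apply (Emax_one (r_dist Z) (r_det Z) (res_depth Z)). Qed.

Lemma PrW_ETD s (Z : resolution trans s) al :
  PrW Z al = ETD Z (fun b => indic (prefix al (erase b))).
Proof. apply (Pw_Emax (r_dist Z) (r_det Z) (res_depth Z)). Qed.

Lemma res_comps_finite s (Z : resolution trans s) : finite (is_comp (rtr Z) (rinit Z)).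
Proof. apply (comps_finite (r_dist Z) (r_det Z) (res_depth Z)). Qed.

Lemma res_maxcomps_enum s (Z : resolution trans s) :
  exists LM, enumerates (maxcomp (rtr Z) (rinit Z)) LM.
Proof. apply finite_enumerates, (finite_sub _ (res_comps_finite Z)). intros c []; auto. Qed.

Lemma TD_nonneg s (Z : resolution trans s) x : 0 <= TD Z x.
Proof. apply fsum_nonneg. intros c [C _]. apply (prob_nonneg C). Qed.

Lemma TD_support s (Z : resolution trans s) :
  exists Xl, NoDup Xl /\ forall x, TD Z x <> 0 -> In x Xl.
Proof.
  destruct (res_maxcomps_enum Z) as [LM [NDM HM]].
  exists (cnodup (map (@tr_of _ _) LM)). split; [apply NoDup_cnodup|].
  intros x Hx. apply cnodup_In.
  destruct (classic (exists c, Cmax (rtr Z) (rinit Z) x c)) as [[c [C [<- M]]] | N].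
  - apply in_map, HM. split; auto.
  - exfalso; apply Hx. apply fsum_empty. intros c Hc; apply N; eauto.
Qed.

Lemma lsum_TD s (Z : resolution trans s) (Xl : list (trace Act)) h :
  NoDup Xl -> (forall x, TD Z x <> 0 -> In x Xl) ->
  lsum (fun x => TD Z x * h x) Xl = ETD Z h.
Proof.
  intros ND HX. destruct (res_maxcomps_enum Z) as [LM [NDM HM]].
  assert (TDe : forall x, TD Z x = lsum (@prob _ _) (cfilter (fun c => tr_of c = x) LM)).
  { intros x. apply fsum_enum. split; [apply NoDup_cfilter; auto|].
    intros c. rewrite in_cfilter, <- HM. unfold Cmax, maxcomp. tauto. }
  unfold ETD, Emax. rewrite (fsum_enum _ (conj NDM HM)).
  rewrite <- (lsum_fibres (@tr_of _ _) _ LM ND).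
  - apply lsum_ext. intros x _. rewrite TDe, Rmult_comm, <- lsum_mul_l. apply lsum_ext.
    intros c Hc. apply in_cfilter in Hc as [_ <-]. lra.
  - intros c Hc. apply HX. rewrite TDe.
    assert (HC : is_comp (rtr Z) (rinit Z) c) by (apply HM in Hc as []; auto).
    assert (prob c <= lsum (@prob _ _) (cfilter (fun c' => tr_of c' = tr_of c) LM)).
    { apply lsum_ge_term; [apply NoDup_cfilter; auto | apply in_cfilter; auto|].
      intros y Hy. apply in_cfilter in Hy as [Hy _]. apply HM in Hy as [C _].
      apply (prob_nonneg C). }
    pose proof (prob_pos HC). lra.
Qed.

Lemma ETD_le1 s (Z : resolution trans s) g : (forall x, g x <= 1) -> ETD Z g <= 1.
Proof.
  intros H. destruct (TD_support Z) as [Xl [ND HX]].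
  rewrite <- (ETD_one Z), <- !(lsum_TD Z _ ND HX).
  apply lsum_le. intros x _. apply Rmult_le_compat_l; [apply TD_nonneg | auto].
Qed.

Lemma PrW_le1 s (Z : resolution trans s) al : PrW Z al <= 1.
Proof. rewrite PrW_ETD. apply ETD_le1. intros; apply indic_bounds. Qed.

Lemma TD_le_Pvis s (Z : resolution trans s) x : TD Z x <= Pvis Z (erase x).
Proof.
  destruct (TD_support Z) as [Xl [ND HX]]. unfold Pvis. rewrite <- (lsum_TD Z _ ND HX).
  assert (Hnn : forall y, In y Xl -> 0 <= TD Z y * indic (erase y = erase x)).
  { intros; apply Rmult_le_pos; [apply TD_nonneg | apply indic_bounds]. }
  destruct (classic (In x Xl)) as [I|N].
  - eapply Rle_trans; [|apply (lsum_ge_term _ x ND I Hnn)].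
    rewrite indic_true by reflexivity. lra.
  - destruct (Req_dec (TD Z x) 0) as [->|E]; [apply lsum_nonneg; auto|].
    destruct N; apply HX; auto.
Qed.

Lemma res_letters s (Z : resolution trans s) : exists B : list Act,
  forall c, is_comp (rtr Z) (rinit Z) c -> letters_in B c.
Proof.
  destruct (res_comps_finite Z) as [L HL].
  exists (flat_map (fun c => erase (tr_of c)) L). intros c C e He. apply in_flat_map; eauto.
Qed.

Lemma indic_eq_prefix (B : list Act) (gm dl : list Act) :
  NoDup B -> (forall e, In e dl -> In e B) ->
  indic (dl = gm) = indic (prefix gm dl) - lsum (fun e => indic (prefix (gm ++ [e]) dl)) B.
Proof.
  intros ND HB.
  assert (Hlong : forall e r, gm ++ e :: r <> gm).
  { intros e r E. apply (f_equal (@length _)) in E. rewrite length_app in E. simpl in E. lia. }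
  destruct (classic (prefix gm dl)) as [[r ->] | Np].
  - rewrite (indic_true (P := prefix gm (gm ++ r))) by (exists r; auto).
    destruct r as [|e0 r].
    + rewrite app_nil_r, indic_true by reflexivity.
      rewrite lsum_eq0; [lra|]. intros e _. apply indic_false. intros [r' Hr].
      apply (Hlong e r'). rewrite <- app_assoc in Hr. auto.
    + rewrite indic_false, (lsum_ext _ (fun e => indic (e0 = e))), lsum_indic_single; auto.
      * lra.
      * apply HB, in_app_iff; right; left; auto.
      * intros e _. apply indic_iff. split.
        -- intros [r' Hr]. rewrite <- app_assoc in Hr. apply app_inv_head in Hr.
           injection Hr; auto.
        -- intros <-. exists r. rewrite <- app_assoc. reflexivity.
  - rewrite !indic_false, lsum_eq0; [lra | | auto |].
    2:{ intros ->. apply Np. exists []. rewrite app_nil_r. reflexivity. }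
    intros e _. apply indic_false. intros [r Hr]. apply Np.
    exists ([e] ++ r). rewrite Hr, app_assoc. reflexivity.
Qed.

Lemma Pvis_PrW s (Z : resolution trans s) (B : list Act) gm : NoDup B ->
  (forall c, is_comp (rtr Z) (rinit Z) c -> letters_in B c) ->
  Pvis Z gm = PrW Z gm - lsum (fun e => PrW Z (gm ++ [e])) B.
Proof.
  intros ND HB. destruct (res_maxcomps_enum Z) as [LM HM].
  rewrite !PrW_ETD, (lsum_ext _ (fun e => lsum (fun c => prob c *
     indic (prefix (gm ++ [e]) (erase (tr_of c)))) LM)).
  - unfold Pvis, ETD, Emax. rewrite !(fsum_enum _ HM), lsum_comm, <- lsum_sub.
    apply lsum_ext. intros c Hc. rewrite lsum_mul_l, <- Rmult_minus_distr_l. f_equal.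
    apply indic_eq_prefix; auto. apply HB. apply HM in Hc as []; auto.
  - intros e _. rewrite PrW_ETD. apply (fsum_enum _ HM).
Qed.

Lemma PrW_eq_Pvis_eq s t (Z1 : resolution trans s) (Z2 : resolution trans t) :
  (forall al, PrW Z1 al = PrW Z2 al) -> forall gm, Pvis Z1 gm = Pvis Z2 gm.
Proof.
  intros H gm. destruct (res_letters Z1) as [B1 H1]. destruct (res_letters Z2) as [B2 H2].
  rewrite (Pvis_PrW Z1 gm (NoDup_cnodup (B1 ++ B2))),
          (Pvis_PrW Z2 gm (NoDup_cnodup (B1 ++ B2))).
  - rewrite H. f_equal. apply lsum_ext. intros e _. auto.
  - intros c C e He. apply cnodup_In, in_app_iff. right. exact (H2 c C e He).
  - intros c C e He. apply cnodup_In, in_app_iff. left. exact (H1 c C e He).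
Qed.

End Resolutions.

Lemma Rinf1_ge0 (E : R -> Prop) : (forall x, E x -> 0 <= x) -> 0 <= Rinf1 E.
Proof.
  intros H. unfold Rinf1. destruct (excluded_middle_informative _) as [e|]; [|lra].
  destruct (constructive_indefinite_description _ e) as [m [Hlb Hm]]; simpl. apply Hm; exact H.
Qed.

Lemma Rinf1_le1 (E : R -> Prop) : (forall x, E x -> x <= 1) -> Rinf1 E <= 1.
Proof.
  intros H. unfold Rinf1. destruct (excluded_middle_informative _) as [e|]; [|lra].
  destruct (constructive_indefinite_description _ e) as [m [Hlb Hglb]]; simpl.
  destruct (classic (exists x, E x)) as [[x Hx]|N].
  - specialize (Hlb x Hx). specialize (H x Hx). lra.
  - assert (m + 1 <= m) by (apply Hglb; intros x Hx; destruct N; eauto). lra.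
Qed.

Lemma Rinf1_lt (E : R -> Prop) eps : Rinf1 E < eps -> eps <= 1 -> exists x, E x /\ x < eps.
Proof.
  intros H He. unfold Rinf1 in H. destruct (excluded_middle_informative _) as [e|]; [|lra].
  destruct (constructive_indefinite_description _ e) as [m [Hlb Hglb]]; simpl in H.
  apply NNPP. intros N.
  assert (eps <= m); [|lra].
  apply Hglb. intros x Hx. apply Rnot_lt_le. intros Hlt. apply N; eauto.
Qed.

Lemma Rinf1_eq0 (E : R -> Prop) : E 0 -> (forall x, E x -> 0 <= x) -> Rinf1 E = 0.
Proof.
  intros H0 H. unfold Rinf1. destruct (excluded_middle_informative _) as [e|N].
  - destruct (constructive_indefinite_description _ e) as [m [Hlb Hglb]]; simpl.
    specialize (Hlb 0 H0). specialize (Hglb 0 H). lra.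
  - exfalso; apply N. exists 0. split; [exact H|]. intros b Hb; apply Hb; auto.
Qed.

Lemma Rsup0_ub (E : R -> Prop) : (forall x, E x -> x <= 1) -> forall x, E x -> x <= Rsup0 E.
Proof.
  intros H x Hx. unfold Rsup0. destruct (excluded_middle_informative _) as [e|N].
  - destruct (constructive_indefinite_description _ e) as [m [Hub Hlub]]; simpl. auto.
  - exfalso. apply N. destruct (completeness E) as [m Hm]; eauto.
    exists 1; exact H.
Qed.

Lemma Rsup0_ge0 (E : R -> Prop) : (forall x, E x -> 0 <= x <= 1) -> 0 <= Rsup0 E.
Proof.
  intros H. destruct (classic (exists x, E x)) as [[x Hx]|N].
  - assert (x <= Rsup0 E) by (apply Rsup0_ub; auto; intros y Hy; apply H, Hy).
    specialize (H x Hx). lra.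
  - unfold Rsup0. destruct (excluded_middle_informative _) as [e|]; [|lra].
    destruct (constructive_indefinite_description _ e) as [m [Hub Hlub]]; simpl.
    assert (m <= m - 1) by (apply Hlub; intros x Hx; destruct N; eauto). lra.
Qed.

Lemma Rsup0_eq0 (E : R -> Prop) : (forall x, E x -> x = 0) -> Rsup0 E = 0.
Proof.
  intros H. unfold Rsup0. destruct (excluded_middle_informative _) as [e|]; auto.
  destruct (constructive_indefinite_description _ e) as [m [Hub Hlub]]; simpl.
  assert (m <= 0) by (apply Hlub; intros x Hx; rewrite (H x Hx); lra).
  destruct (classic (exists x, E x)) as [[x Hx]|N].
  - specialize (Hub x Hx). rewrite (H x Hx) in Hub. lra.
  - assert (m <= m - 1) by (apply Hlub; intros x Hx; destruct N; eauto). lra.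
Qed.

(** * Couplings and the weak trace distance *)

Lemma coupling_support {T} (p q : T -> R) w :
  coupling p q w -> exists Lw, enumerates (fun u => w u <> 0) Lw.
Proof. intros [_ [F _]]. apply finite_enumerates, F. Qed.

Lemma coupling_swap {T} (p q : T -> R) w :
  coupling p q w -> coupling q p (fun u => w (snd u, fst u)).
Proof.
  intros [Hnn [[L HL] [H1 H2]]]. split; [intros; apply Hnn|]. split; [|split; assumption].
  exists (map (fun u => (snd u, fst u)) L). intros [x y] H.
  exact (in_map (fun u => (snd u, fst u)) _ _ (HL _ H)).
Qed.

Lemma coupling_marginal_l {T} (p q : T -> R) w Lw :
  coupling p q w -> enumerates (fun u => w u <> 0) Lw ->
  (forall x, p x <> 0 -> In x (cnodup (map fst Lw))) /\
  forall h, lsum (fun u => w u * h (fst u)) Lw = lsum (fun x => p x * h x) (cnodup (map fst Lw)).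
Proof.
  intros [Hnn [_ [H1 _]]] [ND HL].
  assert (K : forall x, p x = lsum w (cfilter (fun u => fst u = x) Lw)).
  { intros x. rewrite <- H1, <- (fsum_injective_image (fun y => (x, y)) w).
    - apply fsum_enum. split; [apply NoDup_cfilter; auto|].
      intros u. rewrite in_cfilter, <- HL. split.
      + intros [y [-> Hy]]; auto.
      + intros [Hu E]. destruct u as [x' y]; simpl in E; subst. exists y; auto.
    - intros y1 y2 E; injection E; auto.
    - exists (map snd Lw). intros y Hy. apply HL in Hy. exact (in_map snd _ _ Hy). }
  split.
  - intros x Hx. rewrite K in Hx.
    destruct (cfilter (fun u => fst u = x) Lw) as [|u l] eqn:E; [destruct Hx; reflexivity|].
    assert (Hu : In u (cfilter (fun u => fst u = x) Lw)) by (rewrite E; left; auto).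
    apply in_cfilter in Hu as [Hu <-]. apply cnodup_In, in_map, Hu.
  - intros h. rewrite <- (lsum_fibres fst _ Lw (NoDup_cnodup (map fst Lw))).
    + apply lsum_ext. intros x _. rewrite K, Rmult_comm, <- lsum_mul_l. apply lsum_ext.
      intros u Hu. apply in_cfilter in Hu as [_ <-]. lra.
    + intros c Hc. apply cnodup_In, in_map, Hc.
Qed.

Lemma coupling_marginal_r {T} (p q : T -> R) w Lw :
  coupling p q w -> enumerates (fun u => w u <> 0) Lw ->
  (forall y, q y <> 0 -> In y (cnodup (map snd Lw))) /\
  forall h, lsum (fun u => w u * h (snd u)) Lw = lsum (fun y => q y * h y) (cnodup (map snd Lw)).
Proof.
  intros C [ND HL]. set (sw := fun u : T * T => (snd u, fst u)).
  assert (Hsw : forall u, sw (sw u) = u) by (intros [a b]; reflexivity).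
  assert (E : map fst (map sw Lw) = map snd Lw) by (rewrite map_map; reflexivity).
  destruct (coupling_marginal_l (coupling_swap C) (Lw := map sw Lw)) as [A B].
  - split.
    + apply FinFun.Injective_map_NoDup; auto. intros u v Euv.
      rewrite <- (Hsw u), <- (Hsw v), Euv. reflexivity.
    + intros u. rewrite in_map_iff. split.
      * intros H. exists (sw u). split; [apply Hsw | apply HL, H].
      * intros [v [<- Hv]]. apply HL in Hv. change (w (sw (sw v)) <> 0). rewrite Hsw. exact Hv.
  - rewrite E in A, B. split; auto. intros h. rewrite <- B, lsum_map.
    apply lsum_ext. intros [a b] _. reflexivity.
Qed.

Section Distance.
Variables (Act S : Type) (trans : S -> option Act -> (S -> R) -> Prop).
Hypothesis fin : forall s, finite_proc trans s.

Lemma d_w_bounds (x y : trace Act) : 0 <= d_w x y <= 1.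
Proof. unfold d_w. destruct (excluded_middle_informative _); lra. Qed.

Definition coupling_cost (w : trace Act * trace Act -> R) (Lw : list (trace Act * trace Act)) : R :=
  lsum (fun u => w u * d_w (fst u) (snd u)) Lw.

Lemma coupling_cost_bounds s t (Z1 : resolution trans s) (Z2 : resolution trans t) w Lw :
  coupling (TD Z1) (TD Z2) w -> enumerates (fun u => w u <> 0) Lw ->
  0 <= coupling_cost w Lw <= 1.
Proof.
  intros C HL. destruct (coupling_marginal_l C HL) as [A1 B1].
  destruct C as [Hnn _]. split.
  - apply lsum_nonneg. intros u _. apply Rmult_le_pos; [auto | apply d_w_bounds].
  - rewrite <- (ETD_one fin Z1), <- (lsum_TD fin Z1 _ (NoDup_cnodup _) A1), <- B1.
    apply lsum_le. intros u _. apply Rmult_le_compat_l; [auto | apply d_w_bounds].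
Qed.

Lemma kantorovich_cost s t (Z1 : resolution trans s) (Z2 : resolution trans t) r :
  (exists w, coupling (TD Z1) (TD Z2) w /\
     r = fsum (fun u => w u <> 0) (fun u => w u * d_w (fst u) (snd u))) ->
  exists w Lw, coupling (TD Z1) (TD Z2) w /\ enumerates (fun u => w u <> 0) Lw /\
     r = coupling_cost w Lw.
Proof.
  intros [w [C ->]]. destruct (coupling_support C) as [Lw HL].
  exists w, Lw. split; [exact C|]. split; [exact HL|]. apply fsum_enum, HL.
Qed.

Lemma D_w_bounds s t (Z1 : resolution trans s) (Z2 : resolution trans t) : 0 <= D_w Z1 Z2 <= 1.
Proof.
  split; [apply Rinf1_ge0 | apply Rinf1_le1]; intros r Hr;
    destruct (kantorovich_cost Hr) as [w [Lw [C [HL ->]]]];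
    apply (coupling_cost_bounds C HL).
Qed.

(* A pair of [tr_equiv] traces costs nothing and does not change [g]; any other pair costs 1
   and changes [g] by at most 1. *)
Lemma ETD_diff_le_cost s t (Z1 : resolution trans s) (Z2 : resolution trans t) w Lw g :
  coupling (TD Z1) (TD Z2) w -> enumerates (fun u => w u <> 0) Lw ->
  (forall x, 0 <= g x <= 1) -> (forall x y, erase x = erase y -> g x = g y) ->
  Rabs (ETD Z1 g - ETD Z2 g) <= coupling_cost w Lw.
Proof.
  intros C HL Hg Hge.
  destruct (coupling_marginal_l C HL) as [A1 B1].
  destruct (coupling_marginal_r C HL) as [A2 B2].
  rewrite <- (lsum_TD fin Z1 g (NoDup_cnodup _) A1), <- B1.
  rewrite <- (lsum_TD fin Z2 g (NoDup_cnodup _) A2), <- B2.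
  rewrite <- lsum_sub. eapply Rle_trans; [apply Rabs_lsum_le|]. apply lsum_le. intros u _.
  destruct C as [Hnn _]. specialize (Hnn u).
  rewrite <- Rmult_minus_distr_l, Rabs_mult, Rabs_pos_eq by auto.
  apply Rmult_le_compat_l; auto. unfold d_w. destruct (excluded_middle_informative _) as [E|].
  - rewrite (Hge _ _ E), Rminus_diag, Rabs_R0. lra.
  - apply Rabs_le. generalize (Hg (fst u)) (Hg (snd u)). lra.
Qed.

Lemma PrW_diff_lt s t (Z1 : resolution trans s) (Z2 : resolution trans t) eps :
  D_w Z1 Z2 < eps -> eps <= 1 -> forall al, Rabs (PrW Z1 al - PrW Z2 al) < eps.
Proof.
  intros H He al. destruct (Rinf1_lt _ H He) as [r [Hr Hlt]].
  destruct (kantorovich_cost Hr) as [w [Lw [C [HL ->]]]].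
  rewrite !(PrW_ETD fin). eapply Rle_lt_trans; [|exact Hlt].
  apply (ETD_diff_le_cost _ C HL).
  - intros; apply indic_bounds.
  - intros x y E. rewrite E. reflexivity.
Qed.

(* Independent coupling within each class of traces with the same visible part, whose mass is
   [Pvis Z1 (erase x)]; on a class of mass 0 the division by 0 yields 0. *)
Definition class_coupling s t (Z1 : resolution trans s) (Z2 : resolution trans t)
    (u : trace Act * trace Act) : R :=
  if dec (erase (fst u) = erase (snd u))
  then TD Z1 (fst u) * TD Z2 (snd u) / Pvis Z1 (erase (fst u)) else 0.

Lemma class_coupling_nonzero s t (Z1 : resolution trans s) (Z2 : resolution trans t) u :
  class_coupling Z1 Z2 u <> 0 -> TD Z1 (fst u) <> 0 /\ TD Z2 (snd u) <> 0.
Proof.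
  unfold class_coupling. destruct (dec _); [|lra].
  intros H. split; intros E; apply H; rewrite E; lra.
Qed.

Lemma class_coupling_sym s t (Z1 : resolution trans s) (Z2 : resolution trans t) :
  (forall gm, Pvis Z1 gm = Pvis Z2 gm) ->
  forall x y, class_coupling Z1 Z2 (x, y) = class_coupling Z2 Z1 (y, x).
Proof.
  intros HP x y. unfold class_coupling; simpl.
  destruct (dec (erase x = erase y)) as [E|N], (dec (erase y = erase x)); try congruence.
  rewrite HP, E. lra.
Qed.

Lemma class_coupling_marginal s t (Z1 : resolution trans s) (Z2 : resolution trans t) :
  (forall gm, Pvis Z1 gm = Pvis Z2 gm) -> forall x,
  fsum (fun y => class_coupling Z1 Z2 (x, y) <> 0) (fun y => class_coupling Z1 Z2 (x, y))
  = TD Z1 x.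
Proof.
  intros HP x. destruct (TD_support fin Z2) as [X2 [ND2 HX2]].
  rewrite (fsum_enum _ (l := cfilter (fun y => class_coupling Z1 Z2 (x, y) <> 0) X2)).
  2:{ split; [apply NoDup_cfilter; auto|]. intros y. rewrite in_cfilter. split; [|tauto].
      intros Hy. split; auto. apply HX2, (class_coupling_nonzero _ _ _ Hy). }
  rewrite lsum_cfilter_drop by (intros y _; apply NNPP).
  rewrite (lsum_ext _ (fun y =>
    TD Z1 x / Pvis Z1 (erase x) * (TD Z2 y * indic (erase y = erase x)))).
  - rewrite lsum_mul_l, (lsum_TD fin Z2 _ ND2 HX2).
    change (ETD Z2 _) with (Pvis Z2 (erase x)). rewrite <- HP.
    pose proof (TD_le_Pvis fin Z1 x). pose proof (TD_nonneg Z1 x).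
    destruct (Req_dec (Pvis Z1 (erase x)) 0) as [E|E].
    + rewrite E in *. lra.
    + field. exact E.
  - intros y _. unfold class_coupling, indic; simpl.
    destruct (dec (erase x = erase y)), (dec (erase y = erase x)); try congruence; lra.
Qed.

Lemma class_coupling_coupling s t (Z1 : resolution trans s) (Z2 : resolution trans t) :
  (forall gm, Pvis Z1 gm = Pvis Z2 gm) -> coupling (TD Z1) (TD Z2) (class_coupling Z1 Z2).
Proof.
  intros HP. destruct (TD_support fin Z1) as [X1 [ND1 HX1]].
  destruct (TD_support fin Z2) as [X2 [ND2 HX2]].
  split; [|split; [|split]].
  - intros u. unfold class_coupling. destruct (dec _); [|lra].
    pose proof (TD_nonneg Z1 (fst u)). pose proof (TD_nonneg Z2 (snd u)).
    pose proof (Pvis_nonneg Z1 (erase (fst u))).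
    unfold Rdiv. apply Rmult_le_pos; [apply Rmult_le_pos; auto|].
    destruct (Req_dec (Pvis Z1 (erase (fst u))) 0) as [->|E].
    + rewrite Rinv_0. lra.
    + apply Rlt_le, Rinv_0_lt_compat. lra.
  - exists (list_prod X1 X2). intros [x y] Hu.
    destruct (class_coupling_nonzero _ _ _ Hu). apply in_prod; auto.
  - apply (class_coupling_marginal _ _ HP).
  - intros y. rewrite (fsum_ext _ (fun x => class_coupling Z2 Z1 (y, x) <> 0) _
                        (fun x => class_coupling Z2 Z1 (y, x))).
    + apply class_coupling_marginal. intros; symmetry; auto.
    + intros x. rewrite class_coupling_sym; tauto.
    + intros x _. apply class_coupling_sym, HP.
Qed.

Lemma D_w_eq0 s t (Z1 : resolution trans s) (Z2 : resolution trans t) :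
  (forall al, PrW Z1 al = PrW Z2 al) -> D_w Z1 Z2 = 0.
Proof.
  intros H. pose proof (PrW_eq_Pvis_eq fin Z1 Z2 H) as HP. apply Rinf1_eq0.
  - exists (class_coupling Z1 Z2). split; [apply class_coupling_coupling, HP|].
    symmetry. apply fsum_eq0. intros u _. unfold class_coupling, d_w.
    destruct (dec _) as [E|]; [|lra].
    destruct (excluded_middle_informative _) as [|N]; [lra | destruct N; exact E].
  - intros r Hr. destruct (kantorovich_cost Hr) as [w [Lw [C [HL ->]]]].
    apply (coupling_cost_bounds C HL).
Qed.

Definition D_w_inf s (Z1 : resolution trans s) t : R :=
  Rinf1 (fun r => exists Z2 : resolution trans t, r = D_w Z1 Z2).

Definition directed_weak_distance s t : R :=
  Rsup0 (fun r => exists Z1 : resolution trans s, r = D_w_inf Z1 t).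

Lemma D_w_inf_bounds s (Z1 : resolution trans s) t : 0 <= D_w_inf Z1 t <= 1.
Proof. split; [apply Rinf1_ge0 | apply Rinf1_le1]; intros r [Z2 ->]; apply D_w_bounds. Qed.

End Distance.

(** * Discreteness of weak probabilities *)

Lemma finite_count_sums (P : list R) : (forall p, In p P -> 0 < p) ->
  finite (fun v => exists k : R -> nat, (forall p, In p P -> INR (k p) * p <= 1) /\
                                        v = lsum (fun p => INR (k p) * p) P).
Proof.
  induction P as [|p P IH]; intros HP.
  - exists [0]. intros v [k [_ ->]]. left; reflexivity.
  - assert (Pp : 0 < p) by (apply HP; left; auto).
    destruct (INR_unbounded (/ p)) as [K HK].
    destruct IH as [V HV]; [intros; apply HP; right; auto|].
    exists (flat_map (fun j => map (fun r => INR j * p + r) V) (seq 0 (S K))).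
    intros v [k [Hk ->]]. rewrite lsum_cons. apply in_flat_map. exists (k p). split.
    + apply in_seq. split; [lia|]. simpl. apply INR_lt.
      assert (INR (k p) * p <= 1) by (apply Hk; left; auto).
      assert (INR (k p) <= / p).
      { apply (Rmult_le_reg_r p); auto. rewrite Rinv_l; lra. }
      rewrite S_INR. lra.
    + apply in_map, HV. exists k. split; auto. intros; apply Hk; right; auto.
Qed.

(* Each element [p] of [P] occurs at most [1 / p] times in such a sum. *)
Lemma finite_bounded_sums (P : list R) : (forall p, In p P -> 0 < p) ->
  finite (fun v => exists l, incl l P /\ v = lsum (fun x => x) l /\ v <= 1).
Proof.
  intros HP. destruct (finite_count_sums (cnodup P)) as [V HV].
  { intros p Hp. apply HP, cnodup_In, Hp. }
  exists V. intros v [l [Hl [-> Hs]]]. apply HV.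
  set (k := fun p => length (cfilter (fun x => x = p) l)).
  assert (Hk : forall p, INR (k p) * p = lsum (fun x => x) (cfilter (fun x => x = p) l)).
  { intros p. unfold k. rewrite <- lsum_const. apply lsum_ext.
    intros x Hx. apply in_cfilter in Hx as [_ ->]. reflexivity. }
  exists k. split.
  - intros p _. rewrite Hk. eapply Rle_trans; [|exact Hs]. apply lsum_cfilter_le.
    intros x Hx. apply Rlt_le, HP, Hl, Hx.
  - rewrite <- (lsum_fibres (fun x => x) _ l (NoDup_cnodup P)).
    + apply lsum_ext. intros p _. symmetry. apply Hk.
    + intros x Hx. apply cnodup_In, Hl, Hx.
Qed.

Definition minl (l : list R) : R := fold_right Rmin 1 l.

Lemma minl_pos l : (forall x, In x l -> 0 < x) -> 0 < minl l.
Proof.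
  induction l as [|x l IH]; intros H; simpl; [lra|].
  apply Rmin_glb_lt; [apply H; left | apply IH; intros; apply H; right]; auto.
Qed.

Lemma minl_le l x : In x l -> minl l <= x.
Proof.
  induction l as [|y l IH]; intros H; [destruct H|]. simpl.
  destruct H as [->|H]; [apply Rmin_l | eapply Rle_trans; [apply Rmin_r | auto]].
Qed.

Lemma finite_separated (W V : list R) : exists delta, 0 < delta /\
  forall w v, In w W -> In v V -> Rabs (w - v) < delta -> w = v.
Proof.
  set (gaps := map (fun u => Rabs (fst u - snd u))
                   (cfilter (fun u => fst u <> snd u) (list_prod W V))).
  exists (minl gaps). split.
  - apply minl_pos. intros g Hg. apply in_map_iff in Hg as [u [<- Hu]].
    apply in_cfilter in Hu as [_ Hu]. apply Rabs_pos_lt. lra.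
  - intros w v Hw Hv Hlt. apply NNPP. intros Hne.
    assert (Hin : In (Rabs (w - v)) gaps).
    { apply in_map_iff. exists (w, v). split; [reflexivity|]. apply in_cfilter.
      split; [apply in_prod | ]; auto. }
    pose proof (minl_le _ _ Hin). lra.
Qed.

Section Discreteness.
Variables (Act S : Type) (trans : S -> option Act -> (S -> R) -> Prop).
Hypothesis trans_dist : forall s a pi, trans s a pi -> is_dist pi.
Hypothesis img_fin : forall s, image_finite trans s.
Hypothesis fin : forall s, finite_proc trans s.

(* Image finiteness bounds the transitions over a finite alphabet, finiteness the depth. *)
Lemma finite_comps_over (F : list Act) u : finite (fun c => is_comp trans u c /\ letters_in F c).
Proof.
  revert u. apply (depth_ind fin). intros u IH.
  set (allowed := None :: map Some F).
  assert (FT : finite (fun ap : actt Act * (S -> R) =>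
                         exists a, In a allowed /\ fst ap = a /\ trans u a (snd ap))).
  { apply finite_union_list. intros a _. destruct (img_fin u a) as [L HL].
    exists (map (pair a) L). intros [a' pi] [<- T]. apply in_map, HL, T. }
  destruct FT as [La HLa].
  destruct (finite_union_list La (fun ap c => exists y c', c = (fst ap, snd ap, y) :: c' /\
              trans u (fst ap) (snd ap) /\ 0 < snd ap y /\ is_comp trans y c' /\ letters_in F c'))
    as [L HL].
  { intros [a pi] _. simpl. destruct (classic (trans u a pi)) as [T|N].
    - destruct (dist_support (trans_dist T)) as [l [ND [Hl _]]].
      eapply finite_sub.
      + apply (finite_first_step a pi l (fun y c' => is_comp trans y c' /\ letters_in F c')).
        intros y Hy. apply (IH a pi y T), Hl, Hy.
      + intros c [y [c' [-> [_ [P [C O]]]]]]. exists y, c'. repeat split; auto. apply Hl, P.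
    - exists []. intros c [y [c' [_ [T _]]]]. destruct (N T). }
  exists ([] :: L). intros c [C O].
  destruct (is_comp_inv C) as [-> | [a [pi [y [c' [-> [T [P C']]]]]]]]; [left; auto|].
  right. apply letters_in_cons in O as [O Oa]. apply HL. exists (a, pi). split.
  - apply HLa. exists a. repeat split; auto. destruct a as [e|]; [|left; auto].
    right. apply in_map, Oa; auto.
  - exists y, c'. repeat split; auto.
Qed.

Lemma comps_over_prob_lower_bound (F : list Act) u : exists p, 0 < p /\
  forall d, is_comp trans u d -> letters_in F d -> p <= prob d.
Proof.
  destruct (finite_comps_over F u) as [L HL].
  set (probs := map (@prob _ _) (cfilter (fun d => is_comp trans u d /\ letters_in F d) L)).
  exists (minl probs). split.
  - apply minl_pos. intros q Hq. apply in_map_iff in Hq as [d [<- Hd]].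
    apply in_cfilter in Hd as [_ [C _]]. apply (prob_pos C).
  - intros d C O. apply minl_le, in_map, in_cfilter. split; auto.
Qed.

Lemma PrW_outside_letters s (Z : resolution trans s) (B : list Act) :
  (forall c, is_comp (rtr Z) (rinit Z) c -> letters_in B c) ->
  forall gm b, ~ In b B -> PrW Z (gm ++ [b]) = 0.
Proof.
  intros HB gm b Nb. apply fsum_empty. intros c Hc.
  apply (Cw_iff (rtr Z) (rinit Z) (gm ++ [b]) c) in Hc as [C [E _]]. apply Nb, (HB c C). rewrite E.
  apply in_app_iff; right; left; auto.
Qed.

(* If [Z] almost never performs a letter outside [F], then it never does: a first such letter
   would carry the weight of a computation of the underlying PTS over [F]. *)
Lemma res_letters_within t (Z : resolution trans t) (F : list Act) p :
  (forall d, is_comp trans t d -> letters_in F d -> p <= prob d) ->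
  (forall gm b, ~ In b F -> PrW Z (gm ++ [b]) < p) ->
  forall c, is_comp (rtr Z) (rinit Z) c -> letters_in F c.
Proof.
  intros Hp Hout c C. apply NNPP. intros N.
  destruct (first_letter_outside N) as [c0 [b [pi [y [rest [-> [O0 Nb]]]]]]].
  assert (C0 : is_comp (rtr Z) (rinit Z) (c0 ++ [(Some b, pi, y)])).
  { apply (is_comp_app_l _ rest). rewrite <- app_assoc. exact C. }
  destruct (res_comp_image _ (is_comp_app_l _ _ C0)) as [d [D [Pd Td]]].
  rewrite (rinit_corr Z) in D.
  assert (p <= prob c0).
  { rewrite <- Pd. apply Hp; auto. unfold letters_in. rewrite Td. exact O0. }
  pose proof (prob_le_Pw (r_dist Z) (r_det Z) (res_depth fin Z) _ _ _ _ C0).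
  specialize (Hout (erase (tr_of c0)) b Nb). unfold PrW in Hout. unfold Pw in *. lra.
Qed.

Lemma PrW_values_over (F : list Act) t : exists V, forall Z : resolution trans t,
  (forall c, is_comp (rtr Z) (rinit Z) c -> letters_in F c) -> forall al, In (PrW Z al) V.
Proof.
  destruct (finite_comps_over F t) as [L HL].
  set (probs := map (@prob _ _) (cfilter (fun d => is_comp trans t d /\ letters_in F d) L)).
  destruct (finite_bounded_sums probs) as [V HV].
  { intros q Hq. apply in_map_iff in Hq as [d [<- Hd]].
    apply in_cfilter in Hd as [_ [C _]]. apply (prob_pos C). }
  exists V. intros Z HZ al. apply HV.
  destruct (finite_enumerates (Cw_finite (r_dist Z) (r_det Z) (res_depth fin Z) (rinit Z) al))
    as [Lc HLc].
  exists (map (@prob _ _) Lc). split; [|split].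
  - intros q Hq. apply in_map_iff in Hq as [c [<- Hc]].
    apply HLc, (Cw_iff (rtr Z) (rinit Z) al c) in Hc as [C _].
    destruct (res_comp_image _ C) as [d [D [Pd Td]]]. rewrite (rinit_corr Z) in D.
    rewrite <- Pd. apply in_map, in_cfilter. split; [apply HL|]; split; auto;
      unfold letters_in; rewrite Td; apply HZ, C.
  - unfold PrW. rewrite (fsum_enum _ HLc), lsum_map. reflexivity.
  - apply PrW_le1, fin.
Qed.

Lemma D_w_inf_eq0 s t (Z1 : resolution trans s) :
  D_w_inf Z1 t = 0 ->
  exists Z2 : resolution trans t, forall al, PrW Z1 al = PrW Z2 al.
Proof.
  intros H0.
  destruct (res_letters fin Z1) as [B HB].
  destruct (comps_over_prob_lower_bound B t) as [p [Hp Hlow]].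
  destruct (PrW_values_over B s) as [W HW].
  destruct (PrW_values_over B t) as [V HV].
  destruct (finite_separated W V) as [delta [Hd Hsep]].
  set (eps := Rmin (Rmin delta p) 1).
  assert (He : 0 < eps /\ eps <= 1 /\ eps <= delta /\ eps <= p).
  { unfold eps. repeat split.
    - repeat apply Rmin_glb_lt; lra.
    - apply Rmin_r.
    - eapply Rle_trans; apply Rmin_l.
    - eapply Rle_trans; [apply Rmin_l | apply Rmin_r]. }
  assert (Hlt : D_w_inf Z1 t < eps) by (rewrite H0; lra).
  destruct (Rinf1_lt _ Hlt (proj1 (proj2 He))) as [r [[Z2 ->] Hr]].
  exists Z2. pose proof (PrW_diff_lt fin Z1 Z2 Hr (proj1 (proj2 He))) as Hclose.
  assert (HZ2 : forall c, is_comp (rtr Z2) (rinit Z2) c -> letters_in B c).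
  { apply (res_letters_within Z2 Hlow). intros gm b Nb.
    specialize (Hclose (gm ++ [b])).
    rewrite (PrW_outside_letters Z1 HB gm b Nb), Rminus_0_l, Rabs_Ropp in Hclose.
    pose proof (Rle_abs (PrW Z2 (gm ++ [b]))). lra. }
  intros al. apply Hsep.
  - apply HW, HB.
  - apply HV, HZ2.
  - specialize (Hclose al). lra.
Qed.

End Discreteness.

Lemma Rmax_eq0 a b : 0 <= a -> 0 <= b -> (Rmax a b = 0 <-> a = 0 /\ b = 0).
Proof. intros Ha Hb. unfold Rmax. destruct (Rle_dec a b); split; intros; lra. Qed.

Section Directed.
Variables (Act S : Type) (trans : S -> option Act -> (S -> R) -> Prop).
Hypothesis trans_dist : forall s a pi, trans s a pi -> is_dist pi.
Hypothesis img_fin : forall s, image_finite trans s.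
Hypothesis fin : forall s, finite_proc trans s.

Lemma directed_weak_distance_ge0 s t : 0 <= directed_weak_distance trans s t.
Proof. apply Rsup0_ge0. intros r [Z1 ->]. apply (D_w_inf_bounds fin). Qed.

Lemma directed_weak_distance_eq0 s t : directed_weak_distance trans s t = 0 <->
  forall Z1 : resolution trans s, exists Z2 : resolution trans t,
    forall al, PrW Z1 al = PrW Z2 al.
Proof.
  split.
  - intros H Z1. apply (D_w_inf_eq0 trans_dist img_fin fin).
    assert (D_w_inf Z1 t <= directed_weak_distance trans s t).
    { apply Rsup0_ub; [intros r [Z ->]; apply (D_w_inf_bounds fin) | exists Z1; auto]. }
    pose proof (D_w_inf_bounds fin Z1 t). lra.
  - intros H. apply Rsup0_eq0. intros r [Z1 ->]. destruct (H Z1) as [Z2 HZ].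
    apply Rinf1_eq0; [exists Z2; symmetry; apply (D_w_eq0 fin), HZ|].
    intros r [Z ->]. apply (D_w_bounds fin).
Qed.

End Directed.

Theorem proposition5
  (Act S : Type) (trans : S -> option Act -> (S -> R) -> Prop)
  (S_countable : exists f : S -> nat, forall x y, f x = f y -> x = y)
  (trans_dist : forall s a pi, trans s a pi -> is_dist pi)
  (img_fin : forall s, image_finite trans s)
  (fin : forall s, finite_proc trans s)
  (s t : S) :
  weak_trace_metric trans s t = 0 <-> weak_trace_equiv trans s t.
Proof.
  change (Rmax (directed_weak_distance trans s t) (directed_weak_distance trans t s) = 0 <->
          weak_trace_equiv trans s t).
  rewrite Rmax_eq0 by apply (directed_weak_distance_ge0 fin).
  rewrite !(directed_weak_distance_eq0 trans_dist img_fin fin). reflexivity.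
Qed.
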